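(* Let $G$ be a polymer graph obtained by point-attaching from the monomer units $G_1,\ldots,G_k$. Then $$SO(G)>\sum_{i=1}^k SO(G_i).$$
   Context: All graphs are finite and simple. For a graph $G$ and a vertex $u$, $d_u$ denotes the degree of $u$ in $G$. The Sombor index of $G$ is $SO(G)=\sum_{uv\in E(G)}\sqrt{d_u^2+d_v^2}$. A polymer graph obtained by point-attaching from pairwise disjoint connected graphs $G_1,\ldots,G_k$ (the monomer units) is a connected graph constructed as follows: select a vertex of $G_1$ and a vertex of $G_2$ and identify these two vertices; then continue in this manner inductively, each time identifying a vertex of the graph built so far with a vertex of the next monomer unit. *)

From HB Require Import structures.
From mathcomp Require Import all_boot all_order all_algebra.
Set Implicit Arguments. Unset Strict Implicit. Unset Printing Implicit Defensive.
Import Order.TTheory GRing.Theory Num.Theory.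
Local Open Scope ring_scope.

Definition simple_graph (T : finType) (e : rel T) : Prop :=
  symmetric e /\ irreflexive e.

Definition graph_connected (T : finType) (e : rel T) : Prop :=
  forall x y : T, connect e x y.

Definition deg (T : finType) (e : rel T) (x : T) : nat := #|[set y | e x y]|.

(* Sombor index: sum over edges uv of sqrt(d_u^2 + d_v^2).  Each (undirected)
   edge of a simple graph is counted twice among ordered adjacent pairs,
   hence the division by 2. *)
Definition sombor (R : rcfType) (T : finType) (e : rel T) : R :=
  (\sum_(x : T) \sum_(y : T | e x y)
      Num.sqrt ((deg e x)%:R ^+ 2 + (deg e y)%:R ^+ 2)) / 2%:R.

(* G = (V, e) is the polymer graph obtained by point-attaching the monomer
   units G_i = (T i, E i), i = 0..k-1 (in this order): f i : T i -> V is the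
   canonical map of the i-th unit into the glued graph. *)
Definition point_attaching (k : nat) (T : 'I_k -> finType)
    (E : forall i, rel (T i)) (V : finType) (e : rel V)
    (f : forall i, T i -> V) : Prop :=
  [/\ forall i, injective (f i),
      forall i : 'I_k, (0 < i)%N ->
        #|[set v | (v \in codom (f i)) &&
                   [exists j : 'I_k, (j < i)%N && (v \in codom (f j))]]| = 1%N,
      (forall v : V, exists i, v \in codom (f i)) &
      (forall x y : V, e x y <-> exists i, exists a b, [/\ E i a b, f i a = x & f i b = y])].

From HB Require Import structures.
From mathcomp Require Import all_boot all_order all_algebra.
Set Implicit Arguments. Unset Strict Implicit. Unset Printing Implicit Defensive.
Import Order.TTheory GRing.Theory Num.Theory.
Local Open Scope ring_scope.

(* Every monomer unit embeds into the polymer graph, and the embeddings of two units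
   share at most one vertex, hence no edge: the units are edge-disjoint subgraphs of G.
   Degrees can only grow under an embedding and sqrt(x^2 + y^2) is increasing, so SO(G_i)
   is at most the share of SO(G) carried by the image edges of G_i, and these shares add up
   to at most SO(G).  Strictness comes from the vertex where the second unit is attached:
   it gains a neighbour outside the earlier unit containing it, and it has an edge there
   because that unit is connected with at least two vertices. *)

Lemma ler_ltr_sum (R : numDomainType) (I : finType) (P : pred I) (F G : I -> R) i0 :
  (forall i, P i -> F i <= G i) -> P i0 -> F i0 < G i0 ->
  \sum_(i | P i) F i < \sum_(i | P i) G i.
Proof.
move=> leFG Pi0 ltFG0; rewrite (bigD1 i0) //= [ltRHS](bigD1 i0) //=.
by rewrite ltr_leD // ler_sum // => i /andP[/leFG].
Qed.

Lemma ler_sum_subset (R : numDomainType) (J : finType) (B A : {set J}) (F : J -> R) :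
  B \subset A -> {in A, forall q, 0 <= F q} ->
  \sum_(q in B) F q <= \sum_(q in A) F q.
Proof.
move=> /subsetP sBA F_ge0; rewrite [leLHS]big_mkcond [leRHS]big_mkcond ler_sum // => q _.
by case: ifP => [/sBA -> // | _]; case: ifP => // /F_ge0.
Qed.

Lemma ler_sum_disjoint (R : numDomainType) (I J : finType) (S : I -> {set J})
    (A : {set J}) (F : J -> R) :
  (forall i j, i != j -> [disjoint S i & S j]) -> (forall i, S i \subset A) ->
  {in A, forall q, 0 <= F q} ->
  \sum_i \sum_(q in S i) F q <= \sum_(q in A) F q.
Proof.
move=> disjS sSA F_ge0; rewrite -partition_disjoint_bigcup // ler_sum_subset //.
by apply/bigcupsP => i _; exact: sSA.
Qed.

Section SomborWeight.
Variable R : rcfType.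

Definition sombor_weight (m n : nat) : R := Num.sqrt (m%:R ^+ 2 + n%:R ^+ 2).

Lemma sombor_weight_ge0 m n : 0 <= sombor_weight m n.
Proof. exact: sqrtr_ge0. Qed.

Lemma sombor_weight_le m1 n1 m2 n2 : (m1 <= m2)%N -> (n1 <= n2)%N ->
  sombor_weight m1 n1 <= sombor_weight m2 n2.
Proof.
move=> le_m le_n; rewrite /sombor_weight -!natrX -!natrD ler_sqrt ?ler0n // ler_nat.
by rewrite leq_add ?leq_sqr.
Qed.

Lemma sombor_weight_lt m1 n1 m2 n2 : (m1 < m2)%N -> (n1 <= n2)%N ->
  sombor_weight m1 n1 < sombor_weight m2 n2.
Proof.
move=> lt_m le_n; rewrite /sombor_weight -!natrX -!natrD ltr_sqrt ?ltr_nat.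
  by rewrite -addSn leq_add ?leq_sqr ?ltn_sqr.
by rewrite ltr0n addn_gt0 expn_gt0 (leq_ltn_trans (leq0n m1) lt_m).
Qed.

End SomborWeight.

Section GraphHomomorphism.
Variables (T U : finType) (E : rel T) (e : rel U) (h : T -> U).
Hypotheses (h_inj : injective h) (h_hom : forall a b, E a b -> e (h a) (h b)).

Lemma deg_hom_le a : (deg E a <= deg e (h a))%N.
Proof.
rewrite /deg -(card_imset _ h_inj) subset_leq_card //.
by apply/subsetP => z /imsetP[b]; rewrite !inE => E_ab ->; exact: h_hom.
Qed.

Lemma deg_hom_lt a y : e (h a) y -> y \notin codom h -> (deg E a < deg e (h a))%N.
Proof.
move=> e_ay y_out; rewrite /deg -(card_imset _ h_inj).
have y_new : y \notin h @: [set b | E a b].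
  by apply: contra y_out => /imsetP[b _ ->]; exact: codom_f.
have /subset_leq_card : y |: (h @: [set b | E a b]) \subset [set z | e (h a) z].
  apply/subsetP => z /setU1P[-> | /imsetP[b]]; rewrite !inE // => E_ab ->.
  exact: h_hom.
by rewrite cardsU1 y_new.
Qed.

End GraphHomomorphism.

Lemma connected_has_neighbor (T : finType) (E : rel T) :
  graph_connected E -> (1 < #|T|)%N -> forall a, exists b, E a b.
Proof.
move=> conn /card_gt1P[x [y [_ _ x_neq_y]]] a.
have [z z_neq_a] : exists z, z != a.
  by case: (eqVneq x a) => [<-|]; [exists y; rewrite eq_sym | exists x].
have /connectP[[|b p] /= walk z_last] := conn a z.
  by rewrite z_last eqxx in z_neq_a.
by exists b; case/andP: walk.
Qed.

Definition edge_set (T : finType) (E : rel T) : {set T * T} := [set p | E p.1 p.2].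

Definition edge_image (T U : finType) (E : rel T) (h : T -> U) : {set U * U} :=
  [set (h p.1, h p.2) | p in edge_set E].

Lemma sum_edge_set (R : nmodType) (T : finType) (E : rel T) (F : T -> T -> R) :
  \sum_(p in edge_set E) F p.1 p.2 = \sum_x \sum_(y | E x y) F x y.
Proof. by rewrite pair_big_dep; apply: eq_bigl => p; rewrite inE. Qed.

Lemma sum_edge_image (R : nmodType) (T U : finType) (E : rel T) (h : T -> U)
    (F : U -> U -> R) :
  injective h ->
  \sum_(q in edge_image E h) F q.1 q.2 = \sum_x \sum_(y | E x y) F (h x) (h y).
Proof.
move=> h_inj; rewrite big_imset /=; first exact: sum_edge_set.
by move=> [x y] [x' y'] _ _ [/h_inj-> /h_inj->].
Qed.

Section SomborOn.
Variables (R : rcfType) (U : finType) (e : rel U).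

Definition sombor_on (S : {set U * U}) : R :=
  (\sum_(q in S) sombor_weight R (deg e q.1) (deg e q.2)) / 2%:R.

Let weight (x y : U) := sombor_weight R (deg e x) (deg e y).

Lemma sombor_on_edge_set : sombor R e = sombor_on (edge_set e).
Proof. by rewrite /sombor_on (sum_edge_set _ weight). Qed.

Lemma sum_sombor_on_disjoint (I : finType) (S : I -> {set U * U}) :
  (forall i j, i != j -> [disjoint S i & S j]) ->
  (forall i, S i \subset edge_set e) ->
  \sum_i sombor_on (S i) <= sombor R e.
Proof.
move=> disjS sSe; rewrite sombor_on_edge_set /sombor_on -mulr_suml.
rewrite ler_wpM2r ?invr_ge0 ?ler0n // ler_sum_disjoint // => q _.
exact: sombor_weight_ge0.
Qed.

Section Homomorphism.
Variables (T : finType) (E : rel T) (h : T -> U).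
Hypotheses (h_inj : injective h) (h_hom : forall a b, E a b -> e (h a) (h b)).

Lemma sombor_le_hom : sombor R E <= sombor_on (edge_image E h).
Proof.
rewrite /sombor_on (sum_edge_image _ weight) // ler_wpM2r ?invr_ge0 ?ler0n //.
by do 2![apply: ler_sum => ? ?]; rewrite sombor_weight_le ?deg_hom_le.
Qed.

Lemma sombor_lt_hom a b : E a b -> (deg E a < deg e (h a))%N ->
  sombor R E < sombor_on (edge_image E h).
Proof.
move=> E_ab lt_deg; rewrite /sombor_on (sum_edge_image _ weight) //.
rewrite ltr_pM2r ?invr_gt0 ?ltr0n //.
apply: (ler_ltr_sum _ (i0 := a)) => // [x _ | ].
  by apply: ler_sum => ? _; rewrite sombor_weight_le ?deg_hom_le.
apply: (ler_ltr_sum _ (i0 := b)) => // [y _|].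
  by rewrite sombor_weight_le ?deg_hom_le.
by rewrite sombor_weight_lt ?deg_hom_le.
Qed.

End Homomorphism.
End SomborOn.

(* Otherwise the unit index of [E i] and [f i] would become implicit in the section. *)
Unset Implicit Arguments.

Section PointAttaching.
Context {k : nat} {T : 'I_k -> finType} {E : forall i, rel (T i)}.
Context {V : finType} {e : rel V} {f : forall i, T i -> V}.
Hypotheses (attach : point_attaching E e f) (E_irr : forall i : 'I_k, irreflexive (E i)).

Lemma attach_inj (i : 'I_k) : injective (f i).
Proof. by case: attach. Qed.

Lemma attach_hom (i : 'I_k) a b : E i a b -> e (f i a) (f i b).
Proof. by case: attach => _ _ _ edges E_ab; apply/edges; exists i, a, b. Qed.

Lemma attached_vertex_unique (i j j' : 'I_k) x y : (j < i)%N -> (j' < i)%N ->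
  x \in codom (f i) -> x \in codom (f j) ->
  y \in codom (f i) -> y \in codom (f j') -> x = y.
Proof.
move=> lt_ji lt_j'i xi xj yi yj'.
case: attach => _ /(_ i (leq_ltn_trans (leq0n j) lt_ji))/eqP/cards1P[z shared] _ _.
have in_shared w (l : 'I_k) : (l < i)%N -> w \in codom (f i) -> w \in codom (f l) ->
    w = z.
  move=> lt_li wi wl; apply/set1P; rewrite -shared inE wi /=.
  by apply/existsP; exists l; rewrite lt_li.
by rewrite (in_shared x j) // (in_shared y j').
Qed.

Lemma exists_attached_vertex (i : 'I_k) : (0 < i)%N ->
  exists (j : 'I_k) (a : T i) (c : T j), (j < i)%N /\ f i a = f j c.
Proof.
move=> i_gt0; case: attach => _ /(_ i i_gt0)/eqP/cards1P[z shared] _ _.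
have : z \in [set z] by rewrite set11.
rewrite -shared inE => /andP[/codomP[a ->] /existsP[j /andP[lt_ji /codomP[c eq_ac]]]].
by exists j, a, c.
Qed.

Lemma edge_image_sub (i : 'I_k) : edge_image (E i) (f i) \subset edge_set e.
Proof.
by apply/subsetP => _ /imsetP[[a b] E_ab ->]; rewrite !inE in E_ab *; apply: attach_hom.
Qed.

Lemma edge_images_disjoint (i j : 'I_k) : i != j ->
  [disjoint edge_image (E i) (f i) & edge_image (E j) (f j)].
Proof.
wlog lt_ji : i j / (j < i)%N.
  move=> wlog_lt; case: (ltngtP i j) => [lt_ij | lt_ji | /val_inj->]; last by rewrite eqxx.
    by rewrite disjoint_sym eq_sym; apply: wlog_lt.
  exact: wlog_lt.
move=> _; apply/pred0P => -[x y] /=; apply/negbTE/negP.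
case/andP=> /imsetP[[a b] E_ab [-> ->]] /imsetP[[c d] _ [eq_ac eq_bd]].
have /attach_inj eq_ab : f i a = f i b.
  by apply: (attached_vertex_unique i j j); rewrite ?codom_f // ?eq_ac ?eq_bd codom_f.
by rewrite inE /= eq_ab E_irr in E_ab.
Qed.

Lemma attach_deg_lt (i : 'I_k) : (0 < i)%N -> (forall a : T i, exists b, E i a b) ->
  exists (j : 'I_k) (c : T j), (deg (E j) c < deg e (f j c))%N.
Proof.
move=> i_gt0 nbr; have [j [a [c [lt_ji eq_ac]]]] := exists_attached_vertex i i_gt0.
have [b E_ab] := nbr a.
exists j, c; apply: (deg_hom_lt (attach_inj j) (attach_hom j) (y := f i b)).
  by rewrite -eq_ac attach_hom.
apply/negP => b_in_j.
have /attach_inj eq_ba : f i b = f i a.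
  by apply: (attached_vertex_unique i j j) => //; rewrite ?codom_f // eq_ac codom_f.
by rewrite eq_ba E_irr in E_ab.
Qed.

End PointAttaching.

Theorem mainTheorem1 (R : rcfType) (k : nat) (T : 'I_k -> finType)
    (E : forall i, rel (T i)) (V : finType) (e : rel V)
    (f : forall i, T i -> V) :
  (2 <= k)%N ->
  (forall i, [/\ simple_graph (E i), graph_connected (E i) & (1 < #|T i|)%N]) ->
  point_attaching E e f ->
  \sum_(i < k) sombor R (E i) < sombor R e.
Proof.
move=> k_ge2 units attach.
have E_irr i : irreflexive (E i) by case: (units i) => -[].
have nbr i : forall a : T i, exists b, E i a b.
  by case: (units i) => _ /connected_has_neighbor; apply.
have [j [c lt_deg]] := attach_deg_lt attach E_irr (Ordinal k_ge2) isT (nbr _).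
have [d E_cd] := nbr j c.
apply: lt_le_trans (sum_sombor_on_disjoint _ (edge_images_disjoint attach E_irr)
  (edge_image_sub attach)).
apply: (ler_ltr_sum _ (i0 := j)) => // [i _ |].
  exact: sombor_le_hom (attach_inj attach i) (attach_hom attach i).
exact: sombor_lt_hom (attach_inj attach j) (attach_hom attach j) _ _ E_cd lt_deg.
Qed.
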